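(* Let $d\geq 1$ and let $\mathcal Z=G(d,2d)$ be the Grassmannian of $d$-dimensional subspaces of $\mathbb C^{2d}$. Let $U,V,W\in\mathcal Z$ be three points that are pairwise in general position, i.e. $U\cap V=U\cap W=V\cap W=0$ as subspaces of $\mathbb C^{2d}$. Then there is a unique morphism $f\colon\mathbb P^1\to\mathcal Z$ of degree $d$ such that $f(0)=U$, $f(1)=V$ and $f(\infty)=W$.
   Context: The degree of a morphism $f\colon\mathbb P^1\to G(k,n)$ is $\int f_*[\mathbb P^1]\cdot\sigma_1$, where $\sigma_1$ is the class of the Schubert divisor; equivalently it is the degree of the pullback of the tautological quotient bundle (minus the degree of the pullback of the tautological subbundle). Points of $\mathbb P^1$ are written in homogeneous coordinates $(s:t)$, with $0=(1:0)$, $1=(1:1)$, $\infty=(0:1)$. *)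

From mathcomp Require Import all_boot all_order all_algebra.
Set Implicit Arguments. Unset Strict Implicit. Unset Printing Implicit Defensive.
Import Order.TTheory GRing.Theory Num.Theory.
Local Open Scope ring_scope.

(* Conventions:
   - A point of the Grassmannian G(k,n) is represented by a k x n matrix of
     rank k; the point is its row space.  Two representatives give the same
     point iff (A == B)%MS.
   - A point (s:t) of P^1 is a pair (s,t) <> (0,0); 0=(1:0), 1=(1:1), oo=(0:1).
   - A homogeneous binary form of degree e is encoded by q : {poly C} with
     size q <= e+1, via  hom_eval e q s t = \sum_i q_i s^i t^(e-i).
   - A morphism P^1 -> G(k,n) of degree e is a map f on pairs (s,t) whose
     composite with the Pluecker embedding is given by binary forms of degree e
     without common zero on P^1 (Pluecker coordinates of the row space of A
     are the maximal minors det (colsub g A), g : 'I_k -> 'I_n). Degree e is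
     the degree of the pullback of O(1) = class of sigma_1. *)

Definition hom_eval (C : comRingType) (e : nat) (q : {poly C}) (s t : C) : C :=
  \sum_(i < e.+1) q`_i * s ^+ i * t ^+ (e - i).

Definition pluecker (C : comRingType) (k n : nat) (A : 'M[C]_(k, n))
  (g : {ffun 'I_k -> 'I_n}) : C := \det (colsub g A).

Definition is_P1_morphism_of_degree (C : fieldType) (k n : nat)
  (f : C -> C -> 'M[C]_(k, n)) (e : nat) : Prop :=
  exists p : {ffun 'I_k -> 'I_n} -> {poly C},
    (forall g, (size (p g) <= e.+1)%N) /\
    (forall s t : C, (s, t) != (0, 0) -> exists g, hom_eval e (p g) s t != 0) /\
    (forall s t : C, (s, t) != (0, 0) ->
       exists c : C, c != 0 /\
         forall g, pluecker (f s t) g = c * hom_eval e (p g) s t).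

(* Choose representatives A of U and B of W with V = A + B; then col_mx A B is
   invertible, and (s:t) |-> s A + t B is a morphism of degree d through U, V, W,
   since its Pluecker coordinates det (s A_g + t B_g) are binary forms of degree d.
   For uniqueness, let [L R] be the inverse of col_mx A B and write a competitor as
   f = G1 A + G2 B with G1 = f L and G2 = f R.  By Cauchy-Binet and Cramer's rule,
   det G1, det G2 and the entries of adj G1 G2 and adj G2 G1 are, up to one common
   scalar, binary forms a, b, n, m of degree d.  The identities
   det n = a^(d-1) b, det m = b^(d-1) a and n m = a b I, together with the values
   of f at 0, 1 and infinity, force a = alpha s^d, b = beta t^d and
   n = alpha s^(d-1) t I.  Hence G2 = (t/s) G1, i.e. f(s:t) is the row space of
   s A + t B. *)

From mathcomp Require Import all_boot all_order all_algebra.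
From mathcomp Require Import perm ring zify.
Set Implicit Arguments. Unset Strict Implicit. Unset Printing Implicit Defensive.
Import Order.TTheory GRing.Theory Num.Theory.
Local Open Scope ring_scope.

Section BinaryForms.
Variable C : comNzRingType.
Implicit Types (e : nat) (p q : {poly C}) (s t : C).

Lemma hom_evalZ e c q s t : hom_eval e (c *: q) s t = c * hom_eval e q s t.
Proof.
by rewrite /hom_eval big_distrr; apply: eq_bigr => i _; rewrite coefZ -!mulrA.
Qed.

Lemma hom_eval_sum e (I : finType) (F : I -> {poly C}) s t :
  hom_eval e (\sum_i F i) s t = \sum_i hom_eval e (F i) s t.
Proof.
rewrite /hom_eval exchange_big; apply: eq_bigr => i _.
by rewrite coef_sum !mulr_suml.
Qed.

Lemma hom_eval_t0 e q s : hom_eval e q s 0 = q`_e * s ^+ e.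
Proof.
rewrite /hom_eval big_ord_recr /= subnn expr0 mulr1 big1 ?add0r // => i _.
by rewrite expr0n subn_eq0 leqNgt ltn_ord mulr0.
Qed.

Lemma hom_eval_s0 e q t : hom_eval e q 0 t = q`_0 * t ^+ e.
Proof.
rewrite /hom_eval big_ord_recl /= expr0 mulr1 subn0 big1 ?addr0 // => i _.
by rewrite expr0n mulr0 mul0r.
Qed.

Lemma hom_evalXn e k c s t : (k <= e)%N ->
  hom_eval e (c *: 'X^k) s t = c * s ^+ k * t ^+ (e - k).
Proof.
move=> le_ke; rewrite /hom_eval (bigD1 (Ordinal (le_ke : k < e.+1)%N)) //=.
rewrite coefZ coefXn eqxx mulr1 big1 ?addr0 // => i neq_ik.
by rewrite coefZ coefXn (negbTE (neq_ik : i != k :> nat)) mulr0 !mul0r.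
Qed.

Lemma hom_evalC e c s t : hom_eval e c%:P s t = c * t ^+ e.
Proof. by have := @hom_evalXn e 0 c s t (leq0n e); rewrite !expr0 mulr1 subn0 alg_polyC. Qed.

Lemma coefM_sizes e1 e2 p q : (size p <= e1.+1)%N -> (size q <= e2.+1)%N ->
  (p * q)`_(e1 + e2) = p`_e1 * q`_e2.
Proof.
move=> sp sq; rewrite coefM (bigD1 (Ordinal (leq_addr e2 e1 : e1 < (e1 + e2).+1)%N)) //=.
rewrite addKn big1 ?addr0 // => i /eqP neq_ie.
have [lt_ie|gt_ie|eq_ie] := ltngtP i e1; last by case: neq_ie; apply: val_inj.
  by rewrite [q`__]nth_default ?mulr0 // (leq_trans sq) // ltn_subRL ltn_add2r.
by rewrite [p`__]nth_default ?mul0r // (leq_trans sp).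
Qed.

End BinaryForms.

Lemma hom_eval_tN0 (C : fieldType) e (q : {poly C}) s t :
  (size q <= e.+1)%N -> t != 0 -> hom_eval e q s t = t ^+ e * q.[s / t].
Proof.
move=> sq t0; rewrite (horner_coef_wide _ sq) big_distrr /=; apply: eq_bigr => i _.
have le_ie : (i <= e)%N by rewrite -ltnS.
rewrite -[in t ^+ e](subnKC le_ie) exprD exprMn exprVn; field; exact: expf_neq0.
Qed.

Lemma hom_eval_x1 (C : fieldType) e (q : {poly C}) x :
  (size q <= e.+1)%N -> hom_eval e q x 1 = q.[x].
Proof. by move=> sq; rewrite hom_eval_tN0 ?oner_neq0 // expr1n mul1r divr1. Qed.

Definition binary_form (C : comNzRingType) e (phi : C -> C -> C) :=
  exists2 q : {poly C}, (size q <= e.+1)%N & forall s t, phi s t = hom_eval e q s t.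

Section BinaryFormClosure.
Variable C : fieldType.
Implicit Types (e : nat) (phi psi : C -> C -> C).

Lemma binary_form_ext e phi psi :
  (forall s t, phi s t = psi s t) -> binary_form e phi -> binary_form e psi.
Proof. by move=> eq_phi [q sq phiE]; exists q => // s t; rewrite -eq_phi. Qed.

Lemma binary_formZ e c phi :
  binary_form e phi -> binary_form e (fun s t => c * phi s t).
Proof.
move=> [q sq phiE]; exists (c *: q); first exact: leq_trans (size_scale_leq _ _) sq.
by move=> s t; rewrite hom_evalZ phiE.
Qed.

Lemma binary_form_sum e (I : finType) (F : I -> C -> C -> C) :
  (forall i, binary_form e (F i)) -> binary_form e (fun s t => \sum_i F i s t).
Proof.
move=> /fin_all_exists2 [q sq FE]; exists (\sum_i q i).
  by apply: leq_trans (size_sum _ _ _) _; apply/bigmax_leqP => i _.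
by move=> s t; rewrite hom_eval_sum; apply: eq_bigr => i _; rewrite FE.
Qed.

Lemma binary_formM e1 e2 phi psi : binary_form e1 phi -> binary_form e2 psi ->
  binary_form (e1 + e2) (fun s t => phi s t * psi s t).
Proof.
move=> [p sp phiE] [q sq psiE].
have spq : (size (p * q)%R <= (e1 + e2).+1)%N.
  by have := size_polyMleq p q; lia.
exists (p * q) => // s t; rewrite phiE psiE.
have [->|t0] := eqVneq t 0; first by rewrite !hom_eval_t0 exprD coefM_sizes //; ring.
by rewrite !hom_eval_tN0 // hornerM exprD; ring.
Qed.

Lemma binary_form_linear (a b : C) : binary_form 1 (fun s t => a * s + b * t).
Proof.
exists (b%:P + a *: 'X).
  rewrite (leq_trans (size_polyD _ _)) // geq_max size_polyC.
  by rewrite (leq_trans (leq_b1 _)) // (leq_trans (size_scale_leq _ _)) ?size_polyX.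
move=> s t; rewrite /hom_eval !big_ord_recr big_ord0 /= !coefD !coefZ !coefC !coefX /=.
by rewrite !expr0 !expr1; ring.
Qed.

Lemma binary_form_prod n (F : 'I_n -> C -> C -> C) :
  (forall i, binary_form 1 (F i)) -> binary_form n (fun s t => \prod_i F i s t).
Proof.
elim: n F => [|n IHn] F formF.
  by exists 1 => [|s t]; rewrite ?size_poly1 // big_ord0 /hom_eval big_ord1 coef1 !mul1r.
pose G i := F (widen_ord (leqnSn n) i).
apply: (@binary_form_ext _ (fun s t => (\prod_(i < n) G i s t) * F ord_max s t)).
  by move=> s t; rewrite big_ord_recr.
by have := binary_formM (IHn G (fun i => formF _)) (formF ord_max); rewrite addn1.
Qed.

Lemma binary_form_det n (P Q : 'M[C]_n) :
  binary_form n (fun s t => \det (s *: P + t *: Q)).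
Proof.
apply: binary_form_sum => sigma; apply: binary_formZ; apply: binary_form_prod => i.
apply: binary_form_ext (binary_form_linear (P i (sigma i)) (Q i (sigma i))) => s t.
by rewrite !mxE mulrC [t * _]mulrC.
Qed.

End BinaryFormClosure.

Lemma det_mulmx_colsub (C : comNzRingType) d N (F : 'M[C]_(d, N)) (K : 'M[C]_(N, d)) :
  \det (F *m K) = \sum_(h : {ffun 'I_d -> 'I_N}) (\prod_i K (h i) i) * \det (colsub h F).
Proof.
have prodE (sigma : 'S_d) : \prod_i (F *m K) i (sigma i) =
    \sum_(h : {ffun 'I_d -> 'I_N}) \prod_i (F i (h i) * K (h i) (sigma i)).
  rewrite -(bigA_distr_bigA (fun i k => F i k * K k (sigma i))).
  by apply: eq_bigr => i _; rewrite mxE.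
rewrite /determinant.
under eq_bigr => sigma _ do rewrite prodE big_distrr.
under [RHS]eq_bigr => h _ do rewrite big_distrr.
rewrite [RHS]exchange_big /=; apply: eq_bigr => sigma _.
pose shift (h : {ffun 'I_d -> 'I_N}) := [ffun j => h (sigma^-1%g j)].
have shift_inj : injective shift.
  move=> h h' /ffunP eq_h; apply/ffunP => i.
  by have := eq_h (sigma i); rewrite !ffunE permK.
rewrite [RHS](reindex_inj shift_inj); apply: eq_bigr => h _.
rewrite mulrCA big_split /= [_ * \prod_i _]mulrC; congr (_ * (_ * _)).
  rewrite [RHS](reindex_inj (@perm_inj _ sigma)); apply: eq_bigr => i _.
  by rewrite ffunE permK.
by apply: eq_bigr => i _; rewrite mxE ffunE permK.
Qed.

Definition replace_col (C : Type) m n (M : 'M[C]_(m, n)) (v : 'cV[C]_m) (j : 'I_n) :=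
  \matrix_(k, l) if l == j then v k 0 else M k l.

Lemma mulmx_replace_col (C : pzRingType) m p n (F : 'M[C]_(m, p)) (K : 'M[C]_(p, n)) v j :
  F *m replace_col K v j = replace_col (F *m K) (F *m v) j.
Proof.
apply/matrixP => a l; rewrite !mxE; under eq_bigr do rewrite mxE.
by case: eqP.
Qed.

Lemma cramer_adj_mulmx (C : comPzRingType) n (M N : 'M[C]_n) i j :
  (\adj M *m N) i j = \det (replace_col M (col j N) i).
Proof.
rewrite (expand_det_col _ i) mxE; apply: eq_bigr => k _.
rewrite !mxE eqxx mulrC; congr (_ * _).
rewrite /cofactor; congr (_ * \det _); apply/matrixP => a b; rewrite !mxE.
by rewrite eq_sym (negbTE (neq_lift _ _)).
Qed.

Lemma det_adj (C : fieldType) n (M : 'M[C]_n) : \det (\adj M) = \det M ^+ n.-1.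
Proof.
case: n M => [|[|n]] M; first by rewrite !det_mx00.
  by rewrite det_mx11 mxE /cofactor det_mx00 mulr1 /= !expr0.
have adjM : \det M * \det (\adj M) = \det M ^+ n.+2.
  by rewrite -det_mulmx mul_mx_adj det_scalar.
have [detM0|detM_neq0] := eqVneq (\det M) 0; last first.
  by apply: (mulfI detM_neq0); rewrite adjM exprS.
have [adj0|adj_neq0] := eqVneq (\det (\adj M)) 0; first by rewrite adj0 detM0 expr0n.
have adjU : \adj M \in unitmx by rewrite unitmxE unitfE.
have M0 : M = 0.
  have : M *m \adj M = 0 by rewrite mul_mx_adj detM0 -scalemx1 scale0r.
  by move/(congr1 (mulmx^~ (invmx (\adj M)))); rewrite mulmxK // mul0mx.
by move: adj_neq0; rewrite M0 -(scale0r 1%:M) adjZ expr0n /= !scale0r det0 eqxx.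
Qed.

Lemma poly_horner_inj (C : numDomainType) (p q : {poly C}) :
  (forall x, p.[x] = q.[x]) -> p = q.
Proof.
move=> eq_pq; apply/eqP; rewrite -subr_eq0; apply/negPn/negP => pq_neq0.
pose xs := [seq (i%:R : C) | i <- iota 0 (size (p - q))].
have roots_xs : all (root (p - q)) xs.
  by apply/allP => _ /mapP [i _ ->]; rewrite /root hornerD hornerN eq_pq subrr.
have uniq_xs : uniq xs by rewrite map_inj_uniq ?iota_uniq // => i j /eqP; rewrite eqr_nat => /eqP.
by have := max_poly_roots pq_neq0 roots_xs uniq_xs; rewrite size_map size_iota ltnn.
Qed.

Lemma size_det_leq (C : comNzRingType) n k (M : 'M[{poly C}]_n) :
  (forall i j, (size (M i j) <= k.+1)%N) -> (size (\det M) <= (n * k).+1)%N.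
Proof.
move=> sM; apply: leq_trans (size_sum _ _ _) _; apply/bigmax_leqP => sigma _.
rewrite -signr_odd; case: odd; rewrite ?expr1 ?expr0 ?mulN1r ?mul1r ?size_polyN.
all: apply: leq_trans (size_poly_prod_leq _ _) _.
all: rewrite cardT size_enum_ord leq_subLR addnS ltnS -mulnS.
all: by rewrite -[n in (_ <= n * _)%N]card_ord -sum_nat_const leq_sum.
Qed.

Lemma monomial_of_mulXn (C : idomainType) k (q r : {poly C}) :
  (size q <= k.+1)%N -> q = r * 'X^k -> q = q`_k *: 'X^k.
Proof.
move=> sq qE; have [r0|r_neq0] := eqVneq r 0; first by rewrite qE r0 !mul0r coef0 scale0r.
have sr : (size r <= 1)%N by move: sq; rewrite qE size_mulXn //; lia.
by rewrite qE coefMXn ltnn subnn -mul_polyC -size1_polyC.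
Qed.

Lemma mulX_drop_poly (C : nzRingType) (q : {poly C}) : q`_0 = 0 -> q = drop_poly 1 q * 'X.
Proof.
by move=> q0; apply/polyP => -[|i]; rewrite coefMX //= coef_drop_poly addn1.
Qed.

(* In the application a, b, n and m are the forms of det G1, det G2,
   adj G1 *m G2 and adj G2 *m G1, and the hypotheses on a`_d, n, b`_0 and m say
   that (G1, G2) is (invertible, 0) at 0 and (0, invertible) at infinity. *)
Section FormRigidity.
Variables (C : fieldType) (d : nat) (a b : {poly C}) (n m : 'M[{poly C}]_d).
Hypotheses (d_gt0 : (0 < d)%N) (size_a : (size a <= d.+1)%N) (a_top : a`_d != 0)
  (b_bot : b`_0 != 0) (size_n : forall i j, (size (n i j) <= d)%N)
  (m_bot : forall i j, (m i j)`_0 = 0).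
Hypotheses (det_n : \det n = a ^+ d.-1 * b) (det_m : \det m = b ^+ d.-1 * a)
  (mul_nm : n *m m = (a * b)%:M).

Let m1 := map_mx (drop_poly 1) m.

Let mE : m = 'X *: m1.
Proof. by apply/matrixP => i j; rewrite !mxE mulrC -mulX_drop_poly. Qed.

Let rigid_constant : b = (b`_0)%:P.
Proof.
(* [a] has degree exactly d, so [det_n] leaves no room for a nonconstant [b]. *)
apply: size1_polyC.
have size_aE : size a = d.+1.
  by apply/eqP; rewrite eqn_leq size_a ltnNge; apply: contra a_top => /leq_sizeP ->.
have a_neq0 : a != 0 by rewrite -size_poly_eq0 size_aE.
have b_neq0 : b != 0 by apply: contraNneq b_bot => ->; rewrite coef0.
have size_pow : size (a ^+ d.-1) = (d * d.-1).+1.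
  by rewrite -[LHS]prednK ?size_exp ?size_aE // lt0n size_poly_eq0 expf_neq0.
have := size_det_leq (k := d.-1) (fun i j => leq_trans (size_n i j) (leqSpred d)).
by rewrite det_n size_mul ?expf_neq0 // size_pow addSn /= -addn1 leq_add2l.
Qed.

Let beta := b`_0.

Let det_m1 : 'X^d * \det m1 = (beta ^+ d.-1)%:P * a.
Proof. by rewrite -detZ -mE det_m {1}rigid_constant polyC_exp. Qed.

Let rigid_monomial : a = a`_d *: 'X^d.
Proof.
have beta_pow_neq0 : beta ^+ d.-1 != 0 by rewrite expf_neq0.
apply: (monomial_of_mulXn size_a (r := (beta ^+ d.-1)^-1 *: \det m1)).
by rewrite -scalerAl mulrC det_m1 mul_polyC scalerA mulVf ?scale1r.
Qed.

Let rigid_adjugate i j : n i j = (n i j)`_d.-1 *: 'X^(d.-1).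
Proof.
set delta := beta ^+ d.-1 * a`_d; set kappa := a`_d * beta.
have XdE : 'X^d = 'X * 'X^(d.-1) :> {poly C} by rewrite -exprS prednK.
have delta_neq0 : delta != 0 by rewrite mulf_neq0 ?expf_neq0.
have det_m1E : \det m1 = delta%:P.
  apply: (mulfI (monic_neq0 (monicXn C d))).
  by rewrite det_m1 {1}rigid_monomial polyCM -mul_polyC; ring.
have mul_nm1 : n *m m1 = (kappa *: 'X^(d.-1))%:M.
  apply/matrixP => k l; apply: (@mulfI _ 'X); first by rewrite polyX_eq0.
  have := congr1 (fun M : 'M[{poly C}]_d => M k l) mul_nm; rewrite mE -scalemxAr !mxE => ->.
  rewrite {1}rigid_monomial rigid_constant XdE -!mul_polyC -!mulrnAr polyCM; ring.
have n_adj : n *m (\det m1)%:M = (kappa *: 'X^(d.-1))%:M *m \adj m1.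
  by rewrite -mul_mx_adj mulmxA mul_nm1.
have size_nij : (size (n i j) <= d.-1.+1)%N by rewrite prednK.
apply: (monomial_of_mulXn size_nij (r := (delta^-1 * kappa) *: \adj m1 i j)).
have nE : delta%:P * n i j = kappa *: 'X^(d.-1) * \adj m1 i j.
  have := congr1 (fun M : 'M[{poly C}]_d => M i j) n_adj.
  by rewrite mul_mx_scalar mul_scalar_mx det_m1E !mxE.
rewrite -[n i j]scale1r -(mulVf delta_neq0) -[in LHS]scalerA -[delta *: _]mul_polyC nE.
by rewrite -!scalerAl scalerA [_ * \adj m1 i j]mulrC.
Qed.

Lemma form_rigidity : [/\ b = (b`_0)%:P, a = a`_d *: 'X^d &
  forall i j, n i j = (n i j)`_d.-1 *: 'X^(d.-1)].
Proof. by split; [apply: rigid_constant | apply: rigid_monomial | apply: rigid_adjugate]. Qed.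

End FormRigidity.

Section MinorForms.
Variables (C : comNzRingType) (d N : nat) (p : {ffun 'I_d -> 'I_N} -> {poly C}).

Definition minor_form (K : 'M[C]_(N, d)) : {poly C} :=
  \sum_(h : {ffun 'I_d -> 'I_N}) (\prod_i K (h i) i) *: p h.

Definition adj_form (K1 K2 : 'M[C]_(N, d)) : 'M[{poly C}]_d :=
  \matrix_(i, j) minor_form (replace_col K1 (col j K2) i).

Lemma size_minor_form e K :
  (forall g, (size (p g) <= e)%N) -> (size (minor_form K) <= e)%N.
Proof.
move=> size_p; apply: leq_trans (size_sum _ _ _) _; apply/bigmax_leqP => h _.
exact: leq_trans (size_scale_leq _ _) (size_p h).
Qed.

Variables (F : 'M[C]_(d, N)) (c s t : C).
Hypothesis pluecker_F : forall g, pluecker F g = c * hom_eval d (p g) s t.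

Lemma det_mulmx_minor_form K : \det (F *m K) = c * hom_eval d (minor_form K) s t.
Proof.
rewrite det_mulmx_colsub hom_eval_sum big_distrr; apply: eq_bigr => h _.
by rewrite hom_evalZ -/(pluecker F h) pluecker_F mulrCA.
Qed.

Lemma adj_mulmx_adj_form K1 K2 :
  \adj (F *m K1) *m (F *m K2) = c *: map_mx (fun q => hom_eval d q s t) (adj_form K1 K2).
Proof.
apply/matrixP => i j; rewrite cramer_adj_mulmx !mxE.
by rewrite !colEsub -mulmx_colsub -mulmx_replace_col det_mulmx_minor_form.
Qed.

End MinorForms.

Section MinorFormIdentities.
Variables (C : numFieldType) (d N : nat) (p : {ffun 'I_d -> 'I_N} -> {poly C}).
Variable f : C -> 'M[C]_(d, N).
Hypotheses (d_gt0 : (0 < d)%N) (size_p : forall g, (size (p g) <= d.+1)%N)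
  (pluecker_f : forall x, exists c, c != 0 /\
     forall g, pluecker (f x) g = c * hom_eval d (p g) x 1).

Let hom_eval_minor_form K x : hom_eval d (minor_form p K) x 1 = (minor_form p K).[x].
Proof. exact/hom_eval_x1/size_minor_form. Qed.

Let map_adj_form K1 K2 x :
  map_mx (fun q => hom_eval d q x 1) (adj_form p K1 K2) =
  map_mx (horner_eval x) (adj_form p K1 K2).
Proof. by apply/matrixP => i j; rewrite !mxE hom_eval_minor_form. Qed.

Lemma det_adj_form K1 K2 :
  \det (adj_form p K1 K2) = minor_form p K1 ^+ d.-1 * minor_form p K2.
Proof.
apply: poly_horner_inj => x; have [c [c_neq0 fxE]] := pluecker_f x.
have := congr1 determinant (adj_mulmx_adj_form fxE K1 K2).
rewrite det_mulmx det_adj !(det_mulmx_minor_form fxE) detZ map_adj_form det_map_mx.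
have c_powE : c ^+ d = c * c ^+ d.-1 by rewrite -exprS prednK.
rewrite !hom_eval_minor_form hornerM horner_exp c_powE /= horner_evalE => eq_det.
by apply: (mulfI (mulf_neq0 c_neq0 (expf_neq0 d.-1 c_neq0))); rewrite -eq_det exprMn; ring.
Qed.

Lemma adj_form_mul K1 K2 :
  adj_form p K1 K2 *m adj_form p K2 K1 = (minor_form p K1 * minor_form p K2)%:M.
Proof.
apply/matrixP => i j; apply: poly_horner_inj => x; have [c [c_neq0 fxE]] := pluecker_f x.
set G1 := f x *m K1; set G2 := f x *m K2.
have adj_adj : (\adj G1 *m G2) *m (\adj G2 *m G1) = (\det G1 * \det G2)%:M.
  rewrite mulmxA -(mulmxA _ G2) mul_mx_adj mul_mx_scalar -scalemxAl mul_adj_mx.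
  by rewrite scale_scalar_mx mulrC.
have := congr1 (fun M : 'M[C]_d => M i j) adj_adj.
rewrite !(adj_mulmx_adj_form fxE) !(det_mulmx_minor_form fxE) !map_adj_form.
rewrite -scalemxAl -scalemxAr -map_mxM !mxE !hom_eval_minor_form /= horner_evalE => eq_ij.
apply: (mulfI (mulf_neq0 c_neq0 c_neq0)); rewrite -mulrA eq_ij hornerMn hornerM.
by rewrite mulrnAr; congr (_ *+ _); ring.
Qed.

End MinorFormIdentities.

Section PencilUniqueness.
Variables (C : numFieldType) (d N : nat) (A B : 'M[C]_(d, N)) (L R : 'M[C]_(N, d)).
Hypotheses (d_gt0 : (0 < d)%N) (AL : A *m L = 1%:M) (AR : A *m R = 0)
  (BL : B *m L = 0) (BR : B *m R = 1%:M) (LA_RB : L *m A + R *m B = 1%:M).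
Variables (f : C -> C -> 'M[C]_(d, N)) (p : {ffun 'I_d -> 'I_N} -> {poly C}).
Hypotheses (size_p : forall g, (size (p g) <= d.+1)%N)
  (pluecker_f : forall s t, (s, t) != (0, 0) -> exists c, c != 0 /\
     forall g, pluecker (f s t) g = c * hom_eval d (p g) s t).
Hypotheses (f10 : (f 1 0 == A)%MS) (f11 : (f 1 1 == (A + B)%R)%MS) (f01 : (f 0 1 == B)%MS).

Let a := minor_form p L.
Let b := minor_form p R.
Let n := adj_form p L R.
Let m := adj_form p R L.
Let ev s t (M : 'M[{poly C}]_d) := map_mx (fun q => hom_eval d q s t) M.

Let forms_at s t : (s, t) != (0, 0) -> exists2 c, c != 0 &
  [/\ \det (f s t *m L) = c * hom_eval d a s t, \det (f s t *m R) = c * hom_eval d b s t,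
      \adj (f s t *m L) *m (f s t *m R) = c *: ev s t n &
      \adj (f s t *m R) *m (f s t *m L) = c *: ev s t m].
Proof.
move=> st_neq0; have [c [c_neq0 fE]] := pluecker_f st_neq0; exists c => //.
by split; rewrite ?(det_mulmx_minor_form fE) ?(adj_mulmx_adj_form fE).
Qed.

Let affine_neq0 x : (x, 1) != (0, 0) :> C * C.
Proof. by rewrite xpair_eqE oner_eq0 andbF. Qed.

Let pluecker_affine x : exists c, c != 0 /\
  forall g, pluecker (f x 1) g = c * hom_eval d (p g) x 1.
Proof. exact: pluecker_f (affine_neq0 x). Qed.

Let det_n : \det n = a ^+ d.-1 * b.
Proof. exact: det_adj_form d_gt0 size_p pluecker_affine L R. Qed.

Let det_m : \det m = b ^+ d.-1 * a.
Proof. exact: det_adj_form d_gt0 size_p pluecker_affine R L. Qed.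

Let mul_nm : n *m m = (a * b)%:M.
Proof. exact: adj_form_mul size_p pluecker_affine L R. Qed.

Let unit_det (M : 'M[C]_d) : M \in unitmx -> \det M != 0.
Proof. by rewrite unitmxE unitfE. Qed.

Let forms_at_zero : a`_d != 0 /\ forall i j, (n i j)`_d = 0.
Proof.
have [M M_unit fE] := eqmxMunitP _ _ f10.
have [|c c_neq0 [detL _ adjLR _]] := @forms_at 1 0; first by rewrite xpair_eqE oner_eq0.
rewrite fE -!mulmxA AL AR mulmx1 mulmx0 mulmx0 in detL adjLR.
split=> [|i j].
  by apply: contraNneq (unit_det M_unit) => a0; rewrite detL hom_eval_t0 a0 !mul0r mulr0.
have /esym/eqP := congr1 (fun M : 'M[C]_d => M i j) adjLR.
by rewrite !mxE hom_eval_t0 expr1n mulr1 mulf_eq0 (negbTE c_neq0) => /eqP.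
Qed.

Let forms_at_infinity : b`_0 != 0 /\ forall i j, (m i j)`_0 = 0.
Proof.
have [M M_unit fE] := eqmxMunitP _ _ f01.
have [|c c_neq0 [_ detR _ adjRL]] := @forms_at 0 1; first by rewrite xpair_eqE oner_eq0 andbF.
rewrite fE -!mulmxA BL BR mulmx1 mulmx0 mulmx0 in detR adjRL.
split=> [|i j].
  by apply: contraNneq (unit_det M_unit) => b0; rewrite detR hom_eval_s0 b0 !mul0r mulr0.
have /esym/eqP := congr1 (fun M : 'M[C]_d => M i j) adjRL.
by rewrite !mxE hom_eval_s0 expr1n mulr1 mulf_eq0 (negbTE c_neq0) => /eqP.
Qed.

Let forms_at_one i j : (n i j).[1] = a.[1] * (i == j)%:R.
Proof.
have [M M_unit fE] := eqmxMunitP _ _ f11.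
have [c c_neq0 [detL _ adjLR _]] := forms_at (affine_neq0 1).
rewrite fE -!mulmxA !mulmxDl AL AR BL BR addr0 add0r mulmx1 in detL adjLR.
rewrite mul_adj_mx detL in adjLR.
have := congr1 (fun M : 'M[C]_d => M i j) adjLR.
by rewrite !mxE !hom_eval_x1 ?size_minor_form // -mulrnAr mulr_natr => /(mulfI c_neq0).
Qed.

Let forms_shape : [/\ a = a`_d *: 'X^d, b = (b`_0)%:P &
  forall i j, n i j = (a`_d * (i == j)%:R) *: 'X^(d.-1)].
Proof.
have [a_top n_top] := forms_at_zero; have [b_bot m_bot] := forms_at_infinity.
have size_n i j : (size (n i j) <= d)%N.
  apply/leq_sizeP => k; rewrite leq_eqVlt => /predU1P [<- // | lt_dk].
  by apply/nth_default/(leq_trans _ lt_dk); rewrite mxE size_minor_form.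
have [bE aE nE] : [/\ b = (b`_0)%:P, a = a`_d *: 'X^d &
    forall i j, n i j = (n i j)`_d.-1 *: 'X^(d.-1)].
  exact: form_rigidity d_gt0 (size_minor_form _ size_p) a_top b_bot size_n m_bot
    det_n det_m mul_nm.
split=> // i j; have := forms_at_one i j.
by rewrite {1}nE {1}aE !hornerZ !hornerXn !expr1n !mulr1 => <-; apply: nE.
Qed.

Lemma pencil_unique s t : (s, t) != (0, 0) -> (f s t == (s *: A + t *: B)%R)%MS.
Proof.
move=> st_neq0; have [[a_top _] [b_bot m_bot]] := (forms_at_zero, forms_at_infinity).
have [aE bE nE] := forms_shape.
have [c c_neq0 [detL detR adjLR adjRL]] := forms_at st_neq0.
set G1 := f s t *m L in detL adjLR adjRL; set G2 := f s t *m R in detR adjLR adjRL.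
have fE : f s t = G1 *m A + G2 *m B by rewrite -!mulmxA -mulmxDr LA_RB mulmx1.
rewrite aE hom_evalXn // subnn expr0 mulr1 in detL.
rewrite bE hom_evalC in detR.
have [s0|s_neq0] := eqVneq s 0.
  have t_neq0 : t != 0 by apply: contraNneq st_neq0 => t0; rewrite s0 t0.
  have detG2 : \det G2 != 0 by rewrite detR !mulf_neq0 ?expf_neq0.
  have ev_m : ev s t m = 0.
    by apply/matrixP => i j; rewrite [LHS]mxE [RHS]mxE s0 hom_eval_s0 m_bot mul0r.
  have /eqP : G2 *m (\adj G2 *m G1) = 0 by rewrite adjRL ev_m scaler0 mulmx0.
  rewrite mulmxA mul_mx_adj mul_scalar_mx scaler_eq0 (negbTE detG2) => /eqP G1_0.
  apply/eqmxMunitP; exists (t^-1 *: G2).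
    by rewrite unitmxZ ?unitfE ?invr_eq0 ?unitmxE ?unitfE.
  by rewrite fE G1_0 s0 mul0mx add0r scale0r add0r -scalemxAl -scalemxAr scalerA mulVf ?scale1r.
have ev_n : ev s t n = (a`_d * s ^+ d.-1 * t)%:M.
  apply/matrixP => i j; rewrite [LHS]mxE [RHS]mxE nE hom_evalXn ?leq_pred //.
  rewrite (_ : d - d.-1 = 1)%N ?expr1; last by lia.
  by case: (i == j); rewrite ?mulr1 ?mulr0 ?mul0r.
have detG1 : \det G1 != 0 by rewrite detL !mulf_neq0 ?expf_neq0.
have G2E : G2 = (t / s) *: G1.
  have /(congr1 (mulmx G1)) := adjLR.
  rewrite mulmxA mul_mx_adj mul_scalar_mx ev_n -scalemxAr mul_mx_scalar detL scalerA => G2E.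
  apply: (scalerI detG1); rewrite detL G2E scalerA; congr (_ *: _).
  have s_powE : s ^+ d = s ^+ d.-1 * s by rewrite -exprSr prednK.
  by rewrite s_powE; field.
apply/eqmxMunitP; exists (s^-1 *: G1).
  by rewrite unitmxZ ?unitfE ?invr_eq0 ?unitmxE ?unitfE.
by rewrite fE G2E mulmxDr -!scalemxAr -!scalemxAl !scalerA divff ?scale1r.
Qed.

End PencilUniqueness.

Lemma pencil_is_P1_morphism (C : fieldType) d N (A B : 'M[C]_(d, N)) (L R : 'M[C]_(N, d)) :
  A *m L = 1%:M -> A *m R = 0 -> B *m L = 0 -> B *m R = 1%:M ->
  is_P1_morphism_of_degree (fun s t => s *: A + t *: B) d.
Proof.
move=> AL AR BL BR.
have /fin_all_exists2 [p size_p pE] g : exists2 q : {poly C}, (size q <= d.+1)%N &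
    forall s t, pluecker (s *: A + t *: B) g = hom_eval d q s t.
  have [q sq qE] := binary_form_det (colsub g A) (colsub g B).
  exists q => // s t; rewrite -qE /pluecker; congr (\det _).
  by apply/matrixP => i j; rewrite !mxE.
exists p; split=> //; split=> s t; last by exists 1; split=> [|g]; rewrite ?oner_neq0 ?mul1r.
move=> st_neq0; apply/existsP; apply: contraTT st_neq0 => /existsPn p_st0.
have det0 K : \det ((s *: A + t *: B) *m K) = 0.
  rewrite det_mulmx_colsub big1 // => h _.
  by rewrite -/(pluecker _ h) pE (eqP (negPn (p_st0 h))) mulr0.
have := det0 L; have := det0 R.
rewrite !mulmxDl -!scalemxAl AL BL AR BR !scaler0 addr0 add0r !scalemx1 !det_scalar.
move=> /eqP; rewrite expf_eq0 => /andP[_ /eqP->] /eqP; rewrite expf_eq0 => /andP[_ /eqP->].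
by rewrite eqxx.
Qed.

Lemma decomposition_coef_unitmx (C : fieldType) d N (X Y : 'M[C]_d) (V P W : 'M[C]_(d, N)) :
  \rank V = d -> \rank (V :&: W)%MS = 0%N -> V = X *m P + Y *m W -> X \in unitmx.
Proof.
move=> rankV VW0 VE; rewrite -row_free_unit -kermx_eq0; apply/eqP.
set K := kermx X.
have KVE : K *m V = (K *m Y) *m W by rewrite VE mulmxDr !mulmxA mulmx_ker mul0mx add0r.
have : (K *m V <= V :&: W)%MS by rewrite sub_capmx submxMl KVE submxMl.
move/eqP: VW0; rewrite mxrank_eq0 => /eqP->; rewrite submx0 => /eqP KV0.
by apply: (row_free_inj (_ : row_free V)); rewrite ?mul0mx // /row_free rankV.
Qed.

Lemma transversal_normal_form (C : fieldType) d (U V W : 'M[C]_(d, 2 * d)) :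
  \rank U = d -> \rank V = d -> \rank W = d ->
  \rank (U :&: V)%MS = 0%N -> \rank (U :&: W)%MS = 0%N -> \rank (V :&: W)%MS = 0%N ->
  exists A B, [/\ (A == U)%MS, (B == W)%MS, V = A + B & row_full (col_mx A B)].
Proof.
move=> rankU rankV rankW UV0 UW0 VW0.
have rankUW : \rank (col_mx U W) = (d + d)%N.
  by rewrite -addsmxE; have := mxrank_sum_cap U W; rewrite UW0 rankU rankW addn0.
have fullUW : row_full (col_mx U W) by rewrite /row_full rankUW addnn mul2n.
set Y := V *m pinvmx (col_mx U W).
have VE : V = lsubmx Y *m U + rsubmx Y *m W.
  by rewrite -mul_row_col hsubmxK mulmxKpV // submx_full.
have X1_unit : lsubmx Y \in unitmx by apply: (decomposition_coef_unitmx rankV VW0 VE).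
have X2_unit : rsubmx Y \in unitmx.
  apply: (decomposition_coef_unitmx (P := W) (Y := lsubmx Y) rankV _ (etrans VE (addrC _ _))).
  by rewrite capmxC.
have AU : (lsubmx Y *m U == U)%MS by apply/eqmxMunitP; exists (lsubmx Y).
have BW : (rsubmx Y *m W == W)%MS by apply/eqmxMunitP; exists (rsubmx Y).
exists (lsubmx Y *m U), (rsubmx Y *m W); split=> //.
rewrite -(eq_row_full (addsmxE _ _)) (eq_row_full (adds_eqmx (eqmxP AU) (eqmxP BW))).
by rewrite (eq_row_full (addsmxE _ _)).
Qed.

Lemma row_full_col_mx_dual (C : fieldType) d (A B : 'M[C]_(d, 2 * d)) :
  row_full (col_mx A B) -> exists L R,
    [/\ A *m L = 1%:M, A *m R = 0, B *m L = 0, B *m R = 1%:M & L *m A + R *m B = 1%:M].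
Proof.
move=> fullAB; have freeAB : row_free (col_mx A B).
  by rewrite /row_free (eqP fullAB) addnn mul2n.
set P := pinvmx (col_mx A B); exists (lsubmx P), (rsubmx P).
have LA_RB : lsubmx P *m A + rsubmx P *m B = 1%:M by rewrite -mul_row_col hsubmxK mulVpmx.
have := mulmxVp freeAB; rewrite -/P -{1}[P]hsubmxK mul_col_row scalar_mx_block.
by case/eq_block_mx=> AL AR BL BR; split.
Qed.

Theorem mainTheorem1 (C : numClosedFieldType) (d : nat) (hd : (0 < d)%N)
  (U V W : 'M[C]_(d, 2 * d))
  (hU : \rank U = d) (hV : \rank V = d) (hW : \rank W = d)
  (hUV : \rank (U :&: V)%MS = 0%N) (hUW : \rank (U :&: W)%MS = 0%N)
  (hVW : \rank (V :&: W)%MS = 0%N) :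
  exists f : C -> C -> 'M[C]_(d, 2 * d),
    [/\ is_P1_morphism_of_degree f d,
        (f 1 0 == U)%MS, (f 1 1 == V)%MS, (f 0 1 == W)%MS &
        forall f' : C -> C -> 'M[C]_(d, 2 * d),
          is_P1_morphism_of_degree f' d ->
          (f' 1 0 == U)%MS -> (f' 1 1 == V)%MS -> (f' 0 1 == W)%MS ->
          forall s t : C, (s, t) != (0, 0) -> (f' s t == f s t)%MS].
Proof.
have [A [B [AU BW VE fullAB]]] := transversal_normal_form hU hV hW hUV hUW hVW.
have [L [R [AL AR BL BR LA_RB]]] := row_full_col_mx_dual fullAB.
exists (fun s t => s *: A + t *: B); split.
- exact: pencil_is_P1_morphism AL AR BL BR.
- by rewrite scale1r scale0r addr0.
- by rewrite !scale1r -VE !submx_refl.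
- by rewrite scale1r scale0r add0r.
move=> f' [p [size_p [_ pluecker_f']]] f'U f'V f'W.
apply: (pencil_unique hd AL AR BL BR LA_RB size_p pluecker_f').
- by rewrite !(eqmxP AU).
- by rewrite VE in f'V.
- by rewrite !(eqmxP BW).
Qed.
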